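(* Let $n$ be a positive integer and let $s,t$ be real numbers with $t>0$ and $\dfrac{s}{t} > \dfrac{4}{5} n^2$. Then the maximum of $|\det A|$ over all $A \in \mathcal{G}_s^{n\times n}([0,t])$ equals $$s^{n-1}t + \Big\lfloor \frac{n}{2}\Big\rfloor \Big\lfloor \frac{n-1}{2}\Big\rfloor s^{n-3}t^3.$$
   Context: For a real number $s$, a positive integer $n$ and a set $P \subseteq \mathbb{R}$, $\mathcal{G}_s^{n\times n}(P)$ denotes the set of all $n\times n$ real upper Hessenberg matrices $A=(a_{ij})$ with $a_{i+1,i} = s$ for $1\le i\le n-1$, $a_{ij}=0$ for $i > j+1$, and $a_{ij}\in P$ for all $i \le j$. *)

From mathcomp Require Import all_boot all_order all_algebra.
Set Implicit Arguments. Unset Strict Implicit. Unset Printing Implicit Defensive.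
Import Order.TTheory GRing.Theory Num.Theory.
Local Open Scope ring_scope.

(* A \in G_s^{n x n}(P): upper Hessenberg, subdiagonal entries equal to s,
   entries below the subdiagonal zero, entries on/above diagonal in P. *)
Definition in_hessG (R : nzRingType) (n : nat) (s : R) (P : pred R)
    (A : 'M[R]_n) : Prop :=
  forall i j : 'I_n,
    (nat_of_ord i = j.+1 -> A i j = s) /\
    ((j.+1 < i)%N -> A i j = 0) /\
    ((i <= j)%N -> P (A i j)).

Definition itv0 (R : numDomainType) (t : R) : pred R := fun x => (0 <= x) && (x <= t).

(* For an upper Hessenberg A with subdiagonal s, let h solve the triangular system
   s h_c = a_0c - sum_(r<c) a_(r+1)c h_r (c < N = n - 1).  Adding -h_r times row r+1
   to row 0 clears row 0 outside the last column, so det A = (-s)^N rho, with rho the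
   same expression for the last column.  With e = t/s, P_c and Q_c the partial sums
   of the positive and negative parts of h, entries in [0, t] give
   h_c^+ <= e (1 + Q_c) and h_c^- <= e P_c.  A potential argument bounds Q_N by
   e^2 m, m = floor(n/2) floor((n-1)/2), as long as e^2 m <= 1, and then
   P_N <= N e (1 + e^2 m); so |rho| <= t (1 + e^2 m) once N e <= 1, which the
   hypothesis s/t > 4n^2/5 guarantees.  A 0/t matrix for which h is e on the first
   floor(N/2) columns and negative afterwards attains the bound. *)

From mathcomp Require Import all_boot all_order all_algebra.
From mathcomp Require Import zify ring lra.
Import Order.TTheory GRing.Theory Num.Theory.

Lemma leq_mul_halves (N i j : nat) : i + j = N -> i * j <= N.+1./2 * N./2.
Proof.
rewrite -!divn2 => ijN.
have [y [r [Ny r1]]] : exists y r, N = 2 * y + r /\ r <= 1 by exists (N %/ 2), (N %% 2); lia.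
have -> : N.+1 %/ 2 = y + r by lia.
have -> : N %/ 2 = y by lia.
wlog iy : i j ijN / i <= y.
  move=> le_ij; have [|yi] := leqP i y; first exact: le_ij.
  by rewrite mulnC le_ij //; lia.
have [d yE] : exists d, y = i + d by exists (y - i); lia.
have -> : j = i + 2 * d + r by lia.
rewrite yE; nia.
Qed.

Local Open Scope ring_scope.

Lemma sum_ord_if_lt (V : nmodType) (c k : nat) (x y : V) : (k <= c)%N ->
  \sum_(r < c) (if (r < k)%N then x else y) = x *+ k + y *+ (c - k).
Proof.
move=> kc; have [d ->] : exists d, c = (k + d)%N by exists (c - k)%N; rewrite subnKC.
rewrite addKn big_split_ord /=.
rewrite (eq_bigr (fun=> x)) => [|r _]; last by rewrite ltn_ord.
rewrite [X in _ + X](eq_bigr (fun=> y)) => [|r _]; last by rewrite ltnNge leq_addr.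
by rewrite !sumr_const !card_ord.
Qed.

(* Entry in column v of row 0 after subtracting h r times row r.+1, for r < k. *)
Definition hess_residual {R : nzRingType} (h v : nat -> R) (k : nat) : R :=
  v 0%N - \sum_(r < k) v r.+1 * h r.

Section HessenbergDet.

Context {R : comNzRingType} {a : nat -> nat -> R} {s : R} {h : nat -> R} {N : nat}.
Hypothesis a_subdiag : forall j, (j < N)%N -> a j.+1 j = s.
Hypothesis a_lower : forall i j, (i <= N)%N -> (j.+1 < i)%N -> a i j = 0.
Hypothesis h_rec : forall c, (c < N)%N -> s * h c = hess_residual h (a^~ c) c.

Let col_replaced k (v : nat -> R) : 'M[R]_k :=
  \matrix_(i, j) if (j : nat) == k.-1 then v i else a i j.

Lemma det_col_replaced v k : (k <= N)%N ->
  \det (col_replaced k.+1 v) = (-s) ^+ k * hess_residual h v k.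
Proof.
rewrite /hess_residual; elim: k v => [|k IH] v kN.
  by rewrite det_mx11 big_ord0 subr0 mul1r mxE.
rewrite (expand_det_row _ ord_max) big_ord_recr /= big_ord_recr /=.
rewrite big1 ?add0r => [|j _]; last first.
  have jk := ltn_ord j; rewrite mxE /= ifF; last by apply/eqP; lia.
  by rewrite a_lower ?mul0r //; lia.
have minor_last : row' ord_max (col' (widen_ord (leqnSn k.+1) ord_max)
    (col_replaced k.+2 v)) = col_replaced k.+1 v.
  apply/matrixP => i j; rewrite !mxE /= /bump /=.
  have ik := ltn_ord i; have jk := ltn_ord j.
  rewrite (_ : (k < i)%N = false) ?add0n; last by lia.
  case: (leqP k j) => kj /=.
    have -> : (j : nat) = k by lia.
    by rewrite add1n !eqxx.
  have /negbTE -> : (j : nat) != k.+1 by lia.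
  by have /negbTE -> : (j : nat) != k by lia.
have minor_prev : row' ord_max (col' ord_max (col_replaced k.+2 v))
    = col_replaced k.+1 (a^~ k).
  apply/matrixP => i j; rewrite !mxE /= /bump /=.
  have ik := ltn_ord i; have jk := ltn_ord j.
  rewrite (_ : (k < i)%N = false); last by lia.
  rewrite (_ : (k < j)%N = false) ?add0n; last by lia.
  have /negbTE -> : (j : nat) != k.+1 by lia.
  by case: eqP => // ->.
rewrite /cofactor minor_last minor_prev !IH ?(ltnW kN) // !mxE /= eqxx.
have /negbTE -> : k != k.+1 by lia.
have := h_rec _ kN; rewrite /hess_residual => <-.
rewrite a_subdiag // big_ord_recr /=.
have -> : (-1) ^+ (k.+1 + k) = -1 :> R by rewrite -signr_odd addSn /= oddD addbb.
have -> : (-1) ^+ (k.+1 + k.+1) = 1 :> R by rewrite -signr_odd addSn addnS /= oddD addbb.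
rewrite exprS; ring.
Qed.

Lemma det_hessenberg :
  \det (\matrix_(i, j) a i j : 'M[R]_N.+1) = (-s) ^+ N * hess_residual h (a^~ N) N.
Proof.
rewrite -(det_col_replaced (a^~ N) N (leqnn N)) /=; congr (\det _).
by apply/matrixP => i j; rewrite !mxE; case: eqP => // ->.
Qed.

End HessenbergDet.

Lemma hessenberg_coef_exists {R : fieldType} (a : nat -> nat -> R) (s : R) (N : nat) :
  s != 0 -> exists h : nat -> R,
    forall c, (c < N)%N -> s * h c = hess_residual h (a^~ c) c.
Proof.
move=> s0; elim: N => [|N [h h_rec]]; first by exists (fun=> 0).
pose x := (a 0 N - \sum_(r < N) a r.+1 N * h r) / s.
exists (fun r => if (r < N)%N then h r else x) => c.
rewrite ltnS leq_eqVlt => /predU1P[->|cN].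
  rewrite ltnn mulrC divfK //; congr (_ - _).
  by apply: eq_bigr => r _; rewrite ltn_ord.
rewrite cN h_rec //; congr (_ - _).
by apply: eq_bigr => r _; rewrite (ltn_trans (ltn_ord r) cN).
Qed.

Lemma invariant_step_q0 (R : realFieldType) (e i j P Q x M : R) :
  0 <= e * i -> x <= e * (1 + Q) ->
  Q + e * i * (P + (j + 1) * e * (1 + Q)) <= M ->
  Q + e * i * (P + x + j * e * (1 + Q)) <= M.
Proof. by move=> ei_ge0 /(ler_wpM2l ei_ge0); lra. Qed.

Lemma invariant_step_p0 (R : realFieldType) (e i j P Q y M : R) :
  0 < e -> 0 <= i -> 0 <= j -> 0 <= P -> 0 <= Q -> y <= e * P -> M <= 1 ->
  Q + e * (i + 1) * (P + j * e * (1 + Q)) <= M ->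
  Q + e * (i + j + 1) * P <= M ->
  Q + y + e * i * (P + j * e * (1 + (Q + y))) <= M.
Proof.
move=> e_gt0 i_ge0 j_ge0 P_ge0 Q_ge0 y_le M_le1 IH1 IH2.
have iy_le : i * y <= i * (e * P) by rewrite ler_wpM2l.
have iy_le1 : i * y <= 1 by nra.
have eej_ge0 : 0 <= e * e * j by rewrite !mulr_ge0 // ltW.
have : e * e * j * (i * y) <= e * e * j * 1 by rewrite ler_wpM2l.
have : 0 <= e * e * j * Q by rewrite mulr_ge0.
nra.
Qed.

Section Potential.

Context {R : realFieldType} {e M : R} {N : nat} {p q : nat -> R}.
Hypothesis e_gt0 : 0 < e.
Hypothesis p_ge0 : forall c, 0 <= p c.
Hypothesis q_ge0 : forall c, 0 <= q c.
Hypothesis p_or_q_eq0 : forall c, p c = 0 \/ q c = 0.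
Hypothesis p_step : forall c, (c < N)%N -> p c <= e * (1 + \sum_(r < c) q r).
Hypothesis q_step : forall c, (c < N)%N -> q c <= e * \sum_(r < c) p r.
Hypothesis split_le_M : forall i j, (i + j = N)%N -> e ^+ 2 * (i * j)%:R <= M.
Hypothesis M_le1 : M <= 1.

Local Notation P c := (\sum_(r < c) p r).
Local Notation Q c := (\sum_(r < c) q r).

Let P_ge0 c : 0 <= P c. Proof. exact: sumr_ge0. Qed.
Let Q_ge0 c : 0 <= Q c. Proof. exact: sumr_ge0. Qed.

(* The left-hand side bounds the final value of Q when the remaining steps are j
   steps with q = 0 followed by i steps with p = 0, to first order in e. *)
Lemma potential_invariant c : (c <= N)%N -> forall i j, (i + j + c = N)%N ->
  Q c + e * i%:R * (P c + j%:R * e * (1 + Q c)) <= M.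
Proof.
elim: c => [|c IH] cN i j ijcN.
  rewrite !big_ord0 add0r addr0 mulr1.
  have := split_le_M i j ltac:(lia).
  by rewrite natrM expr2; lra.
rewrite !big_ord_recr /=.
have [pc0|qc0] := p_or_q_eq0 c; rewrite ?pc0 ?qc0 !addr0.
  apply: invariant_step_p0 (q_step _ cN) M_le1 _ _; rewrite ?ler0n ?P_ge0 ?Q_ge0 //.
    by rewrite natr1; apply: IH; lia.
  have := IH (ltnW cN) (i + j).+1 0 ltac:(lia).
  by rewrite -natrD natr1 mul0r mul0r addr0.
apply: invariant_step_q0 (p_step _ cN) _; first by rewrite mulr_ge0 ?ler0n ?ltW.
by rewrite natr1; apply: IH; lia.
Qed.

Lemma sum_q_le c : (c <= N)%N -> Q c <= M.
Proof.
move=> cN; have := potential_invariant _ cN (N - c) 0 ltac:(lia).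
have : 0 <= e * (N - c)%:R * P c by rewrite !mulr_ge0 ?ler0n ?P_ge0 ?ltW.
by rewrite mulr0n !mul0r addr0; lra.
Qed.

Lemma sum_p_le c : (c <= N)%N -> P c <= c%:R * e * (1 + M).
Proof.
elim: c => [|c IH] cN; first by rewrite big_ord0 !mul0r.
rewrite big_ord_recr /= -natr1.
have : e * (1 + Q c) <= e * (1 + M).
  by apply: ler_wpM2l; [exact: ltW | rewrite lerD2l sum_q_le // ltnW].
have := p_step _ cN; have := IH (ltnW cN).
lra.
Qed.

End Potential.

Lemma ler_mul_max0 (R : realDomainType) (x y t : R) :
  0 <= x <= t -> x * y <= t * Num.max y 0.
Proof.
case/andP=> x_ge0 x_le; have [y_ge0|y_lt0] := leP 0 y.
  by rewrite ler_wpM2r.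
by rewrite mulr0 mulr_ge0_le0 // ltW.
Qed.

Section HessenbergResidual.

Context {R : realFieldType} {a : nat -> nat -> R} {s t : R} {h : nat -> R} {N : nat}.
Hypothesis s_gt0 : 0 < s.
Hypothesis t_gt0 : 0 < t.
Hypothesis a_in_itv : forall i j, (i <= j)%N -> (j <= N)%N -> 0 <= a i j <= t.
Hypothesis h_rec : forall c, (c < N)%N -> s * h c = hess_residual h (a^~ c) c.

Local Notation hpos r := (Num.max (h r) 0).
Local Notation hneg r := (Num.max (- h r) 0).
Local Notation e := (t / s).

Lemma hess_residual_le c : (c <= N)%N ->
  hess_residual h (a^~ c) c <= t * (1 + \sum_(r < c) hneg r).
Proof.
move=> cN; have /andP[_ a0c_le] := a_in_itv _ _ (leq0n c) cN.
rewrite mulrDr mulr1 mulr_sumr lerD // -sumrN ler_sum // => r _.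
by rewrite -mulrN ler_mul_max0 // a_in_itv // ltn_ord.
Qed.

Lemma hess_residual_ge c : (c <= N)%N ->
  - (t * \sum_(r < c) hpos r) <= hess_residual h (a^~ c) c.
Proof.
move=> cN; have /andP[a0c_ge0 _] := a_in_itv _ _ (leq0n c) cN.
rewrite -[X in X <= _]add0r lerD // mulr_sumr lerN2 ler_sum // => r _.
by rewrite ler_mul_max0 // a_in_itv // ltn_ord.
Qed.

Lemma max0_le_div y B : s * y <= t * B -> 0 <= B -> Num.max y 0 <= e * B.
Proof.
move=> sy_le B_ge0; have [_|_] := leP y 0; first by rewrite mulr_ge0 // divr_ge0 // ltW.
by rewrite -(ler_pM2l s_gt0) mulrA mulrCA divff ?mulr1 ?gt_eqF.
Qed.

Lemma hpos_le c : (c < N)%N -> hpos c <= e * (1 + \sum_(r < c) hneg r).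
Proof.
move=> cN; apply: max0_le_div; first by rewrite h_rec // hess_residual_le // ltnW.
by rewrite addr_ge0 // sumr_ge0 // => r _; rewrite le_max lexx orbT.
Qed.

Lemma hneg_le c : (c < N)%N -> hneg c <= e * \sum_(r < c) hpos r.
Proof.
move=> cN; apply: max0_le_div; last by rewrite sumr_ge0 // => r _; rewrite le_max lexx orbT.
by rewrite mulrN lerNl h_rec // hess_residual_ge // ltnW.
Qed.

Lemma norm_hess_residual_le M :
    (forall i j, (i + j = N)%N -> e ^+ 2 * (i * j)%:R <= M) -> M <= 1 -> N%:R * e <= 1 ->
  `|hess_residual h (a^~ N) N| <= t * (1 + M).
Proof.
move=> split_le_M M_le1 Ne_le1.
have e_gt0 : 0 < e by rewrite divr_gt0.
have hpos_ge0 r : 0 <= hpos r by rewrite le_max lexx orbT.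
have hneg_ge0 r : 0 <= hneg r by rewrite le_max lexx orbT.
have hpos_or_hneg r : hpos r = 0 \/ hneg r = 0.
  have [hr_le0|hr_gt0] := leP (h r) 0; first by left.
  by right; rewrite max_r // oppr_le0 ltW.
have Q_le := sum_q_le e_gt0 hpos_ge0 hneg_ge0 hpos_or_hneg hpos_le hneg_le split_le_M M_le1
  _ (leqnn N).
have P_le := sum_p_le e_gt0 hpos_ge0 hneg_ge0 hpos_or_hneg hpos_le hneg_le split_le_M M_le1
  _ (leqnn N).
have P_le1 : \sum_(r < N) hpos r <= 1 + M.
  have M_ge0 : 0 <= M by have := split_le_M _ _ (add0n N); rewrite mul0n mulr0.
  by apply: le_trans P_le _; rewrite -[leRHS]mul1r ler_wpM2r // addr_ge0.
have := hess_residual_le _ (leqnn N); have := hess_residual_ge _ (leqnn N).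
have := ler_wpM2l (ltW t_gt0) P_le1.
have : t * (1 + \sum_(r < N) hneg r) <= t * (1 + M).
  by apply: ler_wpM2l; [exact: ltW | rewrite lerD2l].
rewrite ler_norml; lra.
Qed.

End HessenbergResidual.

Lemma det_hessG_le (R : realFieldType) (N : nat) (s t M : R) (A : 'M[R]_N.+1) :
    0 < s -> 0 < t -> in_hessG s (itv0 t) A ->
    (forall i j, (i + j = N)%N -> (t / s) ^+ 2 * (i * j)%:R <= M) -> M <= 1 ->
    N%:R * (t / s) <= 1 ->
  `|\det A| <= s ^+ N * (t * (1 + M)).
Proof.
move=> s_gt0 t_gt0 A_hess split_le_M M_le1 Ne_le1.
pose a i j := A (inord i) (inord j).
have -> : A = \matrix_(i, j) a i j by apply/matrixP => i j; rewrite mxE /a !inord_val.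
have a_subdiag j : (j < N)%N -> a j.+1 j = s.
  move=> jN; case: (A_hess (inord j.+1) (inord j)) => + _.
  by apply; rewrite !inordK //; lia.
have a_lower i j : (i <= N)%N -> (j.+1 < i)%N -> a i j = 0.
  move=> iN ji; case: (A_hess (inord i) (inord j)) => _ [+ _].
  by apply; rewrite !inordK //; lia.
have a_in_itv i j : (i <= j)%N -> (j <= N)%N -> 0 <= a i j <= t.
  move=> ij jN; case: (A_hess (inord i) (inord j)) => _ [_].
  by apply; rewrite !inordK //; lia.
have [h h_rec] := hessenberg_coef_exists a s N (lt0r_neq0 s_gt0).
rewrite (det_hessenberg a_subdiag a_lower h_rec) normrM normrX normrN (gtr0_norm s_gt0).
apply: ler_wpM2l; first by rewrite exprn_ge0 // ltW.
exact: (norm_hess_residual_le s_gt0 t_gt0 a_in_itv h_rec M split_le_M M_le1 Ne_le1).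
Qed.

(* Row 0 makes h equal to e on the first N./2 columns; the block i <= N./2 <= j
   then makes it -N./2 e^2 on the others, and the last column collects t times
   each of these N - N./2 negative values, which attains the upper bound. *)
Definition extremal_support (N i j : nat) : bool :=
  if i == 0%N then (j < N./2)%N || (j == N)
  else if j == N then (N./2 < i)%N else (i <= N./2 <= j)%N.

Definition hess_extremal {R : nzRingType} (s t : R) (N i j : nat) : R :=
  if (j.+1 < i)%N then 0 else if i == j.+1 then s
  else if extremal_support N i j then t else 0.

Section HessenbergExtremal.

Context {R : realFieldType} {s t : R} {N : nat}.

Local Notation a := (hess_extremal s t N).
Local Notation k := N./2.
Local Notation e := (t / s).

Lemma hess_extremal_top j : a 0 j = if (j < k)%N || (j == N) then t else 0.
Proof. by []. Qed.

Lemma hess_extremal_inner i j : (0 < i <= j)%N -> (j < N)%N ->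
  a i j = if (i <= k <= j)%N then t else 0.
Proof.
move=> /andP[i_gt0 ij] jN; rewrite /hess_extremal /extremal_support ifF; last by lia.
have /negbTE -> : i != j.+1 by lia.
have /negbTE -> : i != 0%N by lia.
by have /negbTE -> : j != N by lia.
Qed.

Lemma hess_extremal_last i : (0 < i <= N)%N -> a i N = if (k < i)%N then t else 0.
Proof.
move=> /andP[i_gt0 iN]; rewrite /hess_extremal /extremal_support eqxx ifF; last by lia.
have /negbTE -> : i != N.+1 by lia.
by have /negbTE -> : i != 0%N by lia.
Qed.

Lemma hess_extremal_in_hessG :
  0 <= t -> in_hessG s (itv0 t) (\matrix_(i, j) a i j : 'M_N.+1).
Proof.
move=> t_ge0 i j; rewrite !mxE /hess_extremal; split; [|split] => [->|->|ij] //.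
  by rewrite ltnn eqxx.
rewrite ifF; last by lia.
rewrite ifF; last by apply/negbTE; lia.
by case: ifP; rewrite /itv0 lexx ?t_ge0.
Qed.

Hypothesis s_gt0 : 0 < s.
Hypothesis t_ge0 : 0 <= t.

Definition extremal_coef (c : nat) : R := if (c < k)%N then e else - (k%:R * e ^+ 2).

Lemma extremal_coef_rec c : (c < N)%N ->
  s * extremal_coef c = hess_residual extremal_coef (a^~ c) c.
Proof.
move=> cN; rewrite /hess_residual /extremal_coef hess_extremal_top.
have /negbTE -> : c != N by lia.
rewrite orbF; case: (ltnP c k) => [ck|kc].
  rewrite big1 ?subr0 => [|r _]; first by rewrite mulrC divfK ?gt_eqF.
  have rc := ltn_ord r.
  rewrite hess_extremal_inner; [|lia..].
  have -> : (r < k <= c)%N = false by lia.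
  by rewrite mul0r.
rewrite (eq_bigr (fun r : 'I_c => if (r < k)%N then t * e else 0)) => [|r _]; last first.
  have rc := ltn_ord r.
  rewrite hess_extremal_inner; [|lia..].
  by case: ltnP => _; rewrite /= ?kc ?mul0r.
rewrite sum_ord_if_lt // mul0rn addr0 sub0r -mulNrn -mulr_natr.
by field; rewrite gt_eqF.
Qed.

Lemma extremal_residual :
  hess_residual extremal_coef (a^~ N) N = t * (1 + e ^+ 2 * (N.+1./2 * N./2)%:R).
Proof.
rewrite /hess_residual hess_extremal_top eqxx orbT.
rewrite (eq_bigr (fun r : 'I_N => if (r < k)%N then 0 else t * - (k%:R * e ^+ 2)))
  => [|r _].
  rewrite sum_ord_if_lt; last by rewrite -divn2; lia.
  have -> : (N - k = N.+1./2)%N by rewrite -!divn2; lia.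
  rewrite mul0rn add0r -mulNrn -mulr_natr natrM.
  by field; rewrite gt_eqF.
rewrite hess_extremal_last /extremal_coef; last by have := ltn_ord r; lia.
by case: ltnP => _; rewrite ?mul0r.
Qed.

Lemma det_hess_extremal : `|\det (\matrix_(i, j) a i j : 'M_N.+1)| =
  s ^+ N * (t * (1 + e ^+ 2 * (N.+1./2 * N./2)%:R)).
Proof.
have a_subdiag j : (j < N)%N -> a j.+1 j = s by rewrite /hess_extremal ltnn eqxx.
have a_lower i j : (i <= N)%N -> (j.+1 < i)%N -> a i j = 0 by rewrite /hess_extremal => _ ->.
rewrite (det_hessenberg a_subdiag a_lower extremal_coef_rec) extremal_residual.
rewrite normrM normrX normrN (gtr0_norm s_gt0) ger0_norm // mulr_ge0 // addr_ge0 //.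
by rewrite mulr_ge0 ?sqr_ge0.
Qed.

End HessenbergExtremal.

Lemma hess_scale_le1 {R : realFieldType} {N : nat} {s t : R} : 0 < s -> 0 < t ->
    4 / 5 * (N.+1 ^ 2)%:R < s / t ->
  N%:R * (t / s) <= 1 /\ (t / s) ^+ 2 * (N.+1./2 * N./2)%:R <= 1.
Proof.
move=> s_gt0 t_gt0 hst; set e := t / s; set m := (N.+1./2 * N./2)%N.
have e_gt0 : 0 < e by rewrite divr_gt0.
have Ke_lt : (N.+1 ^ 2)%:R * e < 5 / 4.
  have : 4 / 5 * (N.+1 ^ 2)%:R * e < s / t * e by rewrite ltr_pM2r.
  have -> : s / t * e = 1 by rewrite /e; field; rewrite !gt_eqF.
  lra.
have N_le : 2 * N%:R <= (N.+1 ^ 2)%:R :> R by rewrite -natrM ler_nat; nia.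
have K_ge1 : 1 <= (N.+1 ^ 2)%:R :> R by rewrite ler1n; nia.
have m_le : 4 * m%:R <= (N.+1 ^ 2)%:R :> R by rewrite -natrM ler_nat /m -!divn2; nia.
have m_ge0 : 0 <= m%:R :> R := ler0n R m.
split; nra.
Qed.

Lemma hess_bound_closed_form (R : realFieldType) (N : nat) (s t : R) : s != 0 ->
  let m := (N.+1./2 * N./2)%N in
  s ^+ N * (t * (1 + (t / s) ^+ 2 * m%:R)) = s ^+ N * t + m%:R * s ^+ (N.+1 - 3) * t ^+ 3.
Proof.
move=> s_neq0 m; case: N @m => [|[|N]] m; try by rewrite /m mulr0 !mul0r !addr0 mulr1.
have -> : (N.+3 - 3 = N)%N by lia.
by rewrite !exprS; field.
Qed.

Theorem theorem2p9 (R : realFieldType) (n : nat) (s t : R) :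
  (0 < n)%N -> 0 < t -> 4 / 5 * (n ^ 2)%:R < s / t ->
  let M := s ^+ n.-1 * t + ((n./2 * (n.-1)./2)%N)%:R * s ^+ (n - 3) * t ^+ 3 in
  (exists A : 'M[R]_n, in_hessG s (itv0 t) A /\ `|\det A| = M) /\
  (forall A : 'M[R]_n, in_hessG s (itv0 t) A -> `|\det A| <= M).
Proof.
case: n => [//|N] _ t_gt0 hst M.
have s_gt0 : 0 < s.
  have : 0 < s / t by apply: le_lt_trans hst; rewrite mulr_ge0 ?divr_ge0 ?ler0n.
  by rewrite pmulr_lgt0 ?invr_gt0.
have [Ne_le1 em_le1] := hess_scale_le1 s_gt0 t_gt0 hst.
have M_eq : s ^+ N * (t * (1 + (t / s) ^+ 2 * (N.+1./2 * N./2)%:R)) = M.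
  by rewrite hess_bound_closed_form ?gt_eqF.
split.
  exists (\matrix_(i, j) hess_extremal s t N i j); split.
    exact/hess_extremal_in_hessG/ltW.
  by rewrite det_hess_extremal ?ltW.
move=> A A_hess; rewrite -M_eq; apply: det_hessG_le => // i j ijN.
by rewrite ler_wpM2l ?sqr_ge0 // ler_nat leq_mul_halves.
Qed.
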